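(* Consider a market with $n$ buyers, $m$ items and $T$ time periods. Item $j$ has per-period supply $s_j^t\ge0$ and overall supply $s_j\ge0$. Buyer $i$ has budget $B_i\ge0$, valuations $v_{ij}\ge0$ and per-period demands $d_i^t\ge0$. For an allocation $x=(x_{ij}^t)\ge0$ let $u_i^t=\sum_j v_{ij}x_{ij}^t-d_i^t$. Let $x$ be an optimal solution of $$\max_{x\ge0}\sum_i B_i\cdot\frac1T\sum_t\log\Big(\sum_j v_{ij}x_{ij}^t-d_i^t\Big)\ \ \text{s.t.}\ \ \sum_i x_{ij}^t\le s_j^t\ \forall j,t;\qquad\sum_{t,i}x_{ij}^t\le s_j\ \forall j,$$ (where the program is assumed to have a feasible point with all $u_i^t>0$), with optimal dual variables $\lambda_j^t\ge0$ and $\lambda_j\ge0$ of the per-period and overall supply constraints satisfying the KKT conditions, and set $p_j^t=\lambda_j^t+\lambda_j$. Then for every buyer $i$, $$\sum_{t,j}x_{ij}^t p_j^t=B_i\Big[\frac1T\sum_t\Big(1+\frac{d_i^t}{u_i^t}\Big)\Big].$$ *)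

From mathcomp Require Import all_boot all_order all_algebra.
From mathcomp Require Import all_classical all_reals all_analysis.
Set Implicit Arguments. Unset Strict Implicit. Unset Printing Implicit Defensive.
Import Order.TTheory GRing.Theory Num.Theory.
Local Open Scope ring_scope.

Section Market.
Variables (R : realType) (n m T : nat).
Variables (sT : 'I_m -> 'I_T -> R) (sA : 'I_m -> R) (B : 'I_n -> R)
          (v : 'I_n -> 'I_m -> R) (d : 'I_n -> 'I_T -> R).

Definition util (x : 'I_n -> 'I_m -> 'I_T -> R) (i : 'I_n) (t : 'I_T) : R :=
  \sum_(j < m) v i j * x i j t - d i t.

Definition feasible (x : 'I_n -> 'I_m -> 'I_T -> R) : Prop :=
  [/\ (forall i j t, 0 <= x i j t),
      (forall j t, \sum_(i < n) x i j t <= sT j t) &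
      (forall j, \sum_(t < T) \sum_(i < n) x i j t <= sA j)].

(* the points where the objective is defined: feasible and all u_i^t > 0 *)
Definition admissible (x : 'I_n -> 'I_m -> 'I_T -> R) : Prop :=
  feasible x /\ (forall i t, 0 < util x i t).

Definition objective (x : 'I_n -> 'I_m -> 'I_T -> R) : R :=
  \sum_(i < n) B i * ((T%:R)^-1 * \sum_(t < T) ln (util x i t)).

Definition optimal (x : 'I_n -> 'I_m -> 'I_T -> R) : Prop :=
  admissible x /\ (forall y, admissible y -> objective y <= objective x).

(* KKT conditions for the (concave, differentiable on its domain) program,
   with multipliers lamT j t = lambda_j^t and lamA j = lambda_j of the
   per-period and overall supply constraints; the multiplier of x >= 0 is
   eliminated, giving the usual sign condition plus complementary slackness.
   The partial derivative of the objective in x_{ij}^t is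
   B_i * (1/T) * v_ij / u_i^t. *)
Definition KKT (x : 'I_n -> 'I_m -> 'I_T -> R)
    (lamT : 'I_m -> 'I_T -> R) (lamA : 'I_m -> R) : Prop :=
  [/\ admissible x,
      (forall j t, 0 <= lamT j t) /\ (forall j, 0 <= lamA j),
      (forall i j t,
         B i * (T%:R)^-1 * v i j / util x i t <= lamT j t + lamA j),
      (forall i j t,
         x i j t * (lamT j t + lamA j - B i * (T%:R)^-1 * v i j / util x i t) = 0) &
      (forall j t, lamT j t * (sT j t - \sum_(i < n) x i j t) = 0) /\
      (forall j, lamA j * (sA j - \sum_(t < T) \sum_(i < n) x i j t) = 0)].

End Market.

From mathcomp Require Import all_boot all_order all_algebra.
From mathcomp Require Import all_classical all_reals all_analysis.
From mathcomp Require Import ring.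
Import Order.TTheory GRing.Theory Num.Theory.
Local Open Scope ring_scope.

(* Complementary slackness for the constraint x >= 0 says that wherever
   x_ij^t > 0 the price p_j^t equals the marginal utility (B_i/T) v_ij / u_i^t.
   Hence buyer i's spending in period t is (B_i/T) / u_i^t times
   sum_j v_ij x_ij^t = u_i^t + d_i^t, i.e. (B_i/T) (1 + d_i^t / u_i^t). *)

Lemma mulr_divDl_cancel (R : fieldType) (c u d : R) :
  u != 0 -> c / u * (u + d) = c * (1 + d / u).
Proof. by move=> u_neq0; field. Qed.

Section Spending.
Variables (R : realType) (n m T : nat).
Variables (sT : 'I_m -> 'I_T -> R) (sA : 'I_m -> R) (B : 'I_n -> R)
          (v : 'I_n -> 'I_m -> R) (d : 'I_n -> 'I_T -> R).
Variables (x : 'I_n -> 'I_m -> 'I_T -> R)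
          (lamT : 'I_m -> 'I_T -> R) (lamA : 'I_m -> R).

Lemma sum_valuation_util (i : 'I_n) (t : 'I_T) :
  \sum_(j < m) v i j * x i j t = util v d x i t + d i t.
Proof. by rewrite /util subrK. Qed.

Hypothesis kkt : KKT sT sA B v d x lamT lamA.

Lemma KKT_util_neq0 (i : 'I_n) (t : 'I_T) : util v d x i t != 0.
Proof. by case: kkt => -[_ /(_ i t) /gt_eqF ->]. Qed.

Lemma KKT_spend_item (i : 'I_n) (j : 'I_m) (t : 'I_T) :
  x i j t * (lamT j t + lamA j)
  = B i * (T%:R)^-1 / util v d x i t * (v i j * x i j t).
Proof.
case: kkt => _ _ _ /(_ i j t) + _.
rewrite mulrBr => /eqP; rewrite subr_eq0 => /eqP ->.
by ring.
Qed.

Lemma KKT_spend_period (i : 'I_n) (t : 'I_T) :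
  \sum_(j < m) x i j t * (lamT j t + lamA j)
  = B i * (T%:R)^-1 * (1 + d i t / util v d x i t).
Proof.
rewrite (eq_bigr _ (fun j _ => KKT_spend_item i j t)) -mulr_sumr.
by rewrite sum_valuation_util mulr_divDl_cancel ?KKT_util_neq0.
Qed.

End Spending.

Theorem lemma3 (R : realType) (n m T : nat)
  (sT : 'I_m -> 'I_T -> R) (sA : 'I_m -> R) (B : 'I_n -> R)
  (v : 'I_n -> 'I_m -> R) (d : 'I_n -> 'I_T -> R)
  (x : 'I_n -> 'I_m -> 'I_T -> R)
  (lamT : 'I_m -> 'I_T -> R) (lamA : 'I_m -> R) :
  (forall j t, 0 <= sT j t) -> (forall j, 0 <= sA j) ->
  (forall i, 0 <= B i) -> (forall i j, 0 <= v i j) ->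
  (forall i t, 0 <= d i t) ->
  (exists y, admissible sT sA v d y) ->
  optimal sT sA B v d x ->
  KKT sT sA B v d x lamT lamA ->
  forall i : 'I_n,
    \sum_(t < T) \sum_(j < m) x i j t * (lamT j t + lamA j)
    = B i * ((T%:R)^-1 * \sum_(t < T) (1 + d i t / util v d x i t)).
Proof.
move=> _ _ _ _ _ _ _ kkt i.
rewrite mulrA mulr_sumr; apply: eq_bigr => t _.
exact: KKT_spend_period kkt i t.
Qed.
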